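(* Let $\mu$ be a critical offspring distribution and let $X_1,X_2,\dots$ be i.i.d. with $\mathbf P(X_1=i)=\mu_{i+1}$ for $i\ge-1$. Then \[ \mathbf P\Big(\sum_{i=1}^nX_i=-1\Big)=e^{-o(n)} \] as $n\to\infty$ along all $n$ for which this probability is positive.
   Context: An offspring distribution is a probability measure $\mu=(\mu_k)_{k\ge0}$ on $\mathbb Z_+$; it is critical if $\sum_kk\mu_k=1$. *)

From Stdlib Require Import Reals.
From Coquelicot Require Import Coquelicot.
Open Scope R_scope.

Definition offspring_distribution (mu : nat -> R) : Prop :=
  (forall k, 0 <= mu k) /\ is_series mu 1.

Definition critical (mu : nat -> R) : Prop :=
  is_series (fun k => INR k * mu k) 1.

(* conv_pow mu n m = P(K_1 + ... + K_n = m) for K_i i.i.d. with law mu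
   (the n-fold convolution power of mu, evaluated at m). *)
Fixpoint conv_pow (mu : nat -> R) (n m : nat) : R :=
  match n with
  | O => if Nat.eqb m 0 then 1 else 0
  | S n' => sum_f_R0 (fun j => mu j * conv_pow mu n' (m - j)) m
  end.

(* With X_i = K_i - 1 (so P(X_i = i) = mu_{i+1} for i >= -1),
   walk_prob mu n = P(X_1 + ... + X_n = -1) = P(K_1 + ... + K_n = n - 1).
   For n = 0 the empty sum is 0 <> -1, so the probability is 0. *)
Definition walk_prob (mu : nat -> R) (n : nat) : R :=
  match n with
  | O => 0
  | S n' => conv_pow mu n n'
  end.

(* Gluing an excursion of length [n] ending at [-1], one of length [m] ending at [-1],
   one step [+ (j - 1)] (for some [j >= 2] with [mu j > 0]) and [j - 2] steps [-1] gives
   [c * P(S_n = -1) * P(S_m = -1) <= P(S_(n + m + j - 1) = -1)].  So one [n0] with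
   [c * P(S_n0 = -1) >= exp (- delta (n0 + j - 1))] propagates along every residue class
   modulo [n0 + j - 1] into [P(S_n = -1) >= kappa * exp (- delta n)].

   Such an [n0] exists for every [delta > 0]: otherwise the first hitting time [T] of [-1],
   whose law is dominated by [P(S_n = -1)], would have an exponential tail, hence its
   generating function [F] would satisfy [1 - F(s) = O(1 - s)].  But [F(s) = s phi(F(s))]
   for the offspring generating function [phi], so [phi(F) - F >= (1 - s) F], whereas
   criticality gives [phi(y) - y = o(1 - y)] as [y -> 1] and [F(s) -> 1] (a critical walk
   hits [-1] almost surely).  The upper bound is trivial, and if [mu 0 = 0] the walk never
   goes down. *)

From Stdlib Require Import Reals Lra Lia Classical.
From Coquelicot Require Import Coquelicot.
Open Scope R_scope.

Lemma sum_f_R0_incr_N (a : nat -> R) (m n : nat) :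
  (forall i, 0 <= a i) -> (m <= n)%nat -> sum_f_R0 a m <= sum_f_R0 a n.
Proof.
  intros a_ge0 le_mn; induction le_mn as [|n _ IH]; [lra|].
  rewrite tech5; specialize (a_ge0 (S n)); lra.
Qed.

Lemma sum_f_R0_trunc (a : nat -> R) (m n : nat) :
  (m <= n)%nat -> (forall i, (m < i <= n)%nat -> a i = 0) ->
  sum_f_R0 a n = sum_f_R0 a m.
Proof.
  intros le_mn a0; induction le_mn as [|n le_mn IH]; [reflexivity|].
  rewrite tech5, IH, a0 by (try intros; try apply a0; lia); ring.
Qed.

Lemma sum_f_R0_mult_l (a : nat -> R) (c : R) (N : nat) :
  sum_f_R0 (fun i => c * a i) N = c * sum_f_R0 a N.
Proof. induction N as [|N IH]; simpl; [|rewrite IH]; ring. Qed.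

Lemma sum_f_R0_swap (a : nat -> nat -> R) (n m : nat) :
  sum_f_R0 (fun i => sum_f_R0 (a i) m) n =
  sum_f_R0 (fun j => sum_f_R0 (fun i => a i j) n) m.
Proof. induction n as [|n IH]; simpl; [reflexivity|]. now rewrite IH, plus_sum. Qed.

Lemma sum_f_R0_swap_triangle (a : nat -> nat -> R) (N : nat) :
  (forall j n, (n < j)%nat -> a j n = 0) ->
  sum_f_R0 (fun n => sum_f_R0 (fun j => a j n) n) N =
  sum_f_R0 (fun j => sum_f_R0 (a j) N) N.
Proof.
  intros a0; rewrite sum_f_R0_swap; apply sum_eq; intros n le_nN.
  symmetry; apply sum_f_R0_trunc; [lia|]; intros; apply a0; lia.
Qed.

Lemma cauchy_product_partial (a b : nat -> R) (N : nat) :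
  sum_f_R0 (fun n => sum_f_R0 (fun m => a m * b (n - m)%nat) n) N =
  sum_f_R0 (fun m => a m * sum_f_R0 b (N - m)) N.
Proof.
  induction N as [|N IH]; [simpl; ring|].
  rewrite tech5, IH, !tech5, Nat.sub_diag.
  rewrite (sum_eq (fun m => a m * sum_f_R0 b (S N - m))
             (fun m => a m * sum_f_R0 b (N - m) + a m * b (S N - m)%nat)).
  - rewrite plus_sum; simpl; ring.
  - intros i le_iN; replace (S N - i)%nat with (S (N - i)) by lia; rewrite tech5; ring.
Qed.

Lemma cauchy_product_le (a b : nat -> R) (N : nat) :
  (forall i, 0 <= a i) -> (forall i, 0 <= b i) ->
  sum_f_R0 (fun n => sum_f_R0 (fun m => a m * b (n - m)%nat) n) N
  <= sum_f_R0 a N * sum_f_R0 b N.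
Proof.
  intros a_ge0 b_ge0; rewrite cauchy_product_partial, Rmult_comm, <- sum_f_R0_mult_l.
  apply sum_Rle; intros i le_iN; rewrite (Rmult_comm (sum_f_R0 b N)).
  apply Rmult_le_compat_l; [apply a_ge0|apply sum_f_R0_incr_N; auto; lia].
Qed.

Lemma cauchy_product_ge (a b : nat -> R) (N M : nat) :
  (forall i, 0 <= a i) -> (forall i, 0 <= b i) ->
  sum_f_R0 a N * sum_f_R0 b M
  <= sum_f_R0 (fun n => sum_f_R0 (fun m => a m * b (n - m)%nat) n) (N + M).
Proof.
  intros a_ge0 b_ge0; rewrite cauchy_product_partial, Rmult_comm, <- sum_f_R0_mult_l.
  apply Rle_trans with (sum_f_R0 (fun m => a m * sum_f_R0 b (N + M - m)) N).
  - apply sum_Rle; intros i le_iN; rewrite Rmult_comm.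
    apply Rmult_le_compat_l; [apply a_ge0|apply sum_f_R0_incr_N; auto; lia].
  - apply sum_f_R0_incr_N; [|lia]; intros i.
    apply Rmult_le_pos; [apply a_ge0|apply cond_pos_sum; auto].
Qed.

Lemma is_series_partial_sums (a : nat -> R) (l : R) :
  is_series a l <-> is_lim_seq (sum_f_R0 a) l.
Proof.
  split; intros H.
  - now apply is_lim_seq_Reals, is_series_Reals.
  - now apply is_series_Reals, is_lim_seq_Reals.
Qed.

Lemma partial_sum_le_series (a : nat -> R) (l : R) (N : nat) :
  (forall i, 0 <= a i) -> is_series a l -> sum_f_R0 a N <= l.
Proof. intros a_ge0 Ha; apply sum_incr; [now apply is_series_Reals|exact a_ge0]. Qed.

Lemma series_le_of_partial_sums (a : nat -> R) (l c : R) :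
  is_series a l -> (forall N, sum_f_R0 a N <= c) -> l <= c.
Proof.
  intros Ha bound; apply is_series_partial_sums in Ha.
  apply (is_lim_seq_le _ _ _ _ bound Ha (is_lim_seq_const c)).
Qed.

Section ConvolutionPowers.
Variable mu : nat -> R.
Hypothesis mu_ge0 : forall k, 0 <= mu k.
Hypothesis mu_sum1 : is_series mu 1.

Lemma conv_pow_ge0 n m : 0 <= conv_pow mu n m.
Proof.
  revert m; induction n as [|n IH]; intros m; simpl.
  - destruct (Nat.eqb m 0); lra.
  - apply cond_pos_sum; intros; apply Rmult_le_pos; auto.
Qed.

Lemma conv_pow_le1 n m : conv_pow mu n m <= 1.
Proof.
  revert m; induction n as [|n IH]; intros m; simpl.
  - destruct (Nat.eqb m 0); lra.
  - apply Rle_trans with (sum_f_R0 mu m); [|now apply partial_sum_le_series].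
    apply sum_Rle; intros i _.
    pose proof (mu_ge0 i); pose proof (IH (m - i)%nat); pose proof (conv_pow_ge0 n (m - i)).
    nra.
Qed.

Lemma conv_pow_1 m : conv_pow mu 1 m = mu m.
Proof.
  destruct m as [|m]; [simpl; ring|].
  change (conv_pow mu 1 (S m))
    with (sum_f_R0 (fun j => mu j * conv_pow mu 0 (S m - j)) (S m)).
  rewrite tech5, sum_eq_R0, Nat.sub_diag; [simpl; ring|].
  intros i le_im; replace (S m - i)%nat with (S (m - i)) by lia; simpl; ring.
Qed.

Lemma conv_pow_at_0 n : conv_pow mu n 0 = mu 0%nat ^ n.
Proof. induction n as [|n IH]; simpl; [reflexivity|]. rewrite IH; ring. Qed.

Lemma conv_pow_mul_le a x b y :
  conv_pow mu a x * conv_pow mu b y <= conv_pow mu (a + b) (x + y).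
Proof.
  revert x; induction a as [|a IH]; intros x.
  - destruct x; simpl; [lra|]. rewrite Rmult_0_l; apply conv_pow_ge0.
  - simpl (S a + b)%nat; simpl conv_pow.
    rewrite Rmult_comm, scal_sum.
    apply Rle_trans with (sum_f_R0 (fun j => mu j * conv_pow mu (a + b) (x + y - j)) x).
    + apply sum_Rle; intros j le_jx.
      replace (x + y - j)%nat with (x - j + y)%nat by lia.
      pose proof (IH (x - j)%nat); pose proof (mu_ge0 j); pose proof (conv_pow_ge0 b y).
      nra.
    + apply sum_f_R0_incr_N; [|lia].
      intros; apply Rmult_le_pos; auto; apply conv_pow_ge0.
Qed.

Lemma conv_pow_lt_eq0 : mu 0%nat = 0 -> forall n m, (m < n)%nat -> conv_pow mu n m = 0.
Proof.
  intros mu0 n; induction n as [|n IH]; intros m lt_mn; [lia|]; simpl.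
  apply sum_eq_R0; intros [|i] le_im; [rewrite mu0|rewrite IH by lia]; ring.
Qed.

Lemma walk_prob_ge0 n : 0 <= walk_prob mu n.
Proof. destruct n; unfold walk_prob; [lra|apply conv_pow_ge0]. Qed.

Lemma walk_prob_le1 n : walk_prob mu n <= 1.
Proof. destruct n; unfold walk_prob; [lra|apply conv_pow_le1]. Qed.

Lemma walk_prob_supermult j n m : (2 <= j)%nat ->
  mu j * mu 0%nat ^ (j - 2) * walk_prob mu n * walk_prob mu m
  <= walk_prob mu (n + m + j - 1).
Proof.
  intros le2j.
  destruct n as [|n]; [rewrite Rmult_0_r, Rmult_0_l; apply walk_prob_ge0|].
  destruct m as [|m]; [rewrite Rmult_0_r; apply walk_prob_ge0|].
  replace (S n + S m + j - 1)%nat with (S (n + m + j + 0)) by lia.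
  unfold walk_prob.
  rewrite <- conv_pow_1, <- conv_pow_at_0.
  pose proof (conv_pow_mul_le (S n) n (S m) m) as step1.
  pose proof (conv_pow_mul_le (S n + S m) (n + m) 1 j) as step2.
  pose proof (conv_pow_mul_le (S n + S m + 1) (n + m + j) (j - 2) 0) as step3.
  replace (S n + S m + 1 + (j - 2))%nat with (S (n + m + j + 0)) in step3 by lia.
  pose proof (conv_pow_ge0 1 j); pose proof (conv_pow_ge0 (j - 2) 0).
  apply Rle_trans with
    (conv_pow mu (S n + S m + 1) (n + m + j) * conv_pow mu (j - 2) 0); [|exact step3].
  replace (conv_pow mu 1 j * conv_pow mu (j - 2) 0 * conv_pow mu (S n) n * conv_pow mu (S m) m)
    with (conv_pow mu (S n) n * conv_pow mu (S m) m * conv_pow mu 1 j * conv_pow mu (j - 2) 0)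
    by ring.
  apply Rmult_le_compat_r; auto.
  apply Rle_trans with (conv_pow mu (S n + S m) (n + m) * conv_pow mu 1 j); [|exact step2].
  apply Rmult_le_compat_r; [apply conv_pow_ge0|exact step1].
Qed.

End ConvolutionPowers.

(* [first_passage mu k n]: probability that the walk with steps [K - 1], [K ~ mu],
   started at level [k], first hits level [0] at time [n].  From level [k' + 1]
   the first step leads to [k' + j] with probability [mu j]; the sum over [j] is
   cut at [n'] because from a level above [n'] the walk cannot reach [0] in [n']
   steps. *)
Fixpoint first_passage (mu : nat -> R) (k n : nat) : R :=
  match n, k with
  | O, O => 1
  | O, S _ | S _, O => 0
  | S n', S k' => sum_f_R0 (fun j => mu j * first_passage mu (k' + j) n') n'
  end.

Section FirstPassage.
Variable mu : nat -> R.
Hypothesis mu_ge0 : forall k, 0 <= mu k.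
Hypothesis mu_sum1 : is_series mu 1.

Lemma first_passage_ge0 k n : 0 <= first_passage mu k n.
Proof.
  revert k; induction n as [|n IH]; intros [|k]; simpl; try lra.
  apply cond_pos_sum; intros; apply Rmult_le_pos; auto.
Qed.

Lemma first_passage_early k n : (n < k)%nat -> first_passage mu k n = 0.
Proof.
  revert k; induction n as [|n IH]; intros [|k] lt_nk; simpl; try lia; try reflexivity.
  apply sum_eq_R0; intros i _; rewrite IH by lia; ring.
Qed.

Lemma first_passage_succ_level k n :
  first_passage mu (S k) (S n) = sum_f_R0 (fun j => mu j * first_passage mu (k + j) n) n.
Proof. reflexivity. Qed.

(* Reaching [0] from [a + b] means first reaching [b], then [0]. *)
Lemma first_passage_add a b n :
  first_passage mu (a + b) n =
  sum_f_R0 (fun m => first_passage mu a m * first_passage mu b (n - m)) n.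
Proof.
  revert a b; induction n as [|n IH]; intros [|a] b.
  - destruct b; simpl; ring.
  - simpl; ring.
  - rewrite decomp_sum by lia; simpl pred.
    rewrite sum_eq_R0 by (intros; simpl; ring).
    simpl (first_passage mu 0 0); simpl (0 + b)%nat; rewrite Nat.sub_0_r; ring.
  - rewrite decomp_sum by lia; simpl pred.
    simpl (first_passage mu (S a) 0); rewrite Rmult_0_l, Rplus_0_l.
    replace (S a + b)%nat with (S (a + b)) by lia; rewrite first_passage_succ_level.
    transitivity (sum_f_R0 (fun j => sum_f_R0 (fun m =>
        mu j * first_passage mu (a + j) m * first_passage mu b (n - m)) n) n).
    + apply sum_eq; intros j _.
      replace (a + b + j)%nat with (a + j + b)%nat by lia.
      rewrite IH, <- sum_f_R0_mult_l; apply sum_eq; intros; ring.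
    + rewrite <- sum_f_R0_swap_triangle
        by (intros j m lt_mj; rewrite first_passage_early by lia; ring).
      apply sum_eq; intros m _; rewrite first_passage_succ_level.
      replace (S n - S m)%nat with (n - m)%nat by lia.
      rewrite Rmult_comm, <- sum_f_R0_mult_l; apply sum_eq; intros; ring.
Qed.

Lemma first_passage_le_conv_pow k n :
  (k <= n)%nat -> first_passage mu k n <= conv_pow mu n (n - k).
Proof.
  revert k; induction n as [|n IH]; intros [|k] le_kn.
  - simpl; lra.
  - lia.
  - apply conv_pow_ge0; auto.
  - rewrite first_passage_succ_level.
    replace (S n - S k)%nat with (n - k)%nat by lia; simpl conv_pow.
    rewrite (sum_f_R0_trunc _ (n - k) n) by
      (try lia; intros i lt_i; rewrite first_passage_early by lia; ring).
    apply sum_Rle; intros i le_i; apply Rmult_le_compat_l; auto.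
    replace (n - k - i)%nat with (n - (k + i))%nat by lia; apply IH; lia.
Qed.

Lemma first_passage_le_walk_prob n : first_passage mu 1 n <= walk_prob mu n.
Proof.
  destruct n as [|n]; [simpl; lra|].
  pose proof (first_passage_le_conv_pow 1 (S n)) as bound.
  replace (S n - 1)%nat with n in bound by lia; apply bound; lia.
Qed.

Lemma first_passage_mass_le1 k N : sum_f_R0 (first_passage mu k) N <= 1.
Proof.
  revert k; induction N as [|N IH]; intros [|k].
  - simpl; lra.
  - simpl; lra.
  - rewrite decomp_sum, sum_eq_R0 by (try intros; simpl; try lra; lia); simpl; lra.
  - rewrite decomp_sum by lia; simpl pred; simpl (first_passage mu (S k) 0).
    rewrite Rplus_0_l.
    rewrite (sum_eq _ (fun n => sum_f_R0 (fun j => mu j * first_passage mu (k + j) n) n))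
      by (intros; apply first_passage_succ_level).
    rewrite sum_f_R0_swap_triangle
      by (intros j n lt_nj; rewrite first_passage_early by lia; ring).
    apply Rle_trans with (sum_f_R0 mu N); [|now apply partial_sum_le_series].
    apply sum_Rle; intros j _; rewrite sum_f_R0_mult_l.
    pose proof (IH (k + j)%nat); pose proof (mu_ge0 j); nra.
Qed.

End FirstPassage.

Lemma pow_le1 (x : R) (n : nat) : 0 <= x <= 1 -> x ^ n <= 1.
Proof. intros; rewrite <- (pow1 n); apply pow_incr; lra. Qed.

Lemma pow_sub_pow_le (x y : R) (j : nat) :
  0 <= y <= x -> x <= 1 -> x ^ j - y ^ j <= INR j * (x - y).
Proof.
  intros y_range x_le1; induction j as [|j IH]; [simpl; lra|].
  rewrite S_INR; simpl.
  assert (0 <= y ^ j) by (apply pow_le; lra).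
  assert (y ^ j <= 1) by (apply pow_le1; lra).
  assert (y ^ j <= x ^ j) by (apply pow_incr; lra).
  replace (x * x ^ j - y * y ^ j) with (x * (x ^ j - y ^ j) + y ^ j * (x - y)) by ring.
  nra.
Qed.

Definition pow_tangent_gap (x : R) (k : nat) : R := x ^ k - 1 + INR k * (1 - x).

Lemma pow_tangent_gap_succ x k :
  pow_tangent_gap x (S k) = x * pow_tangent_gap x k + INR k * (1 - x) ^ 2.
Proof. unfold pow_tangent_gap; rewrite S_INR; simpl; ring. Qed.

Lemma pow_tangent_gap_ge0 x k : 0 <= x <= 1 -> 0 <= pow_tangent_gap x k.
Proof.
  intros x_range; induction k as [|k IH]; [unfold pow_tangent_gap; simpl; lra|].
  rewrite pow_tangent_gap_succ; pose proof (pos_INR k).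
  assert (0 <= (1 - x) ^ 2) by (apply pow_le; lra).
  assert (0 <= INR k * (1 - x) ^ 2) by (apply Rmult_le_pos; lra).
  nra.
Qed.

Lemma pow_tangent_gap_gt0 x k : 0 <= x < 1 -> (2 <= k)%nat -> 0 < pow_tangent_gap x k.
Proof.
  intros x_range le2k; destruct k as [|[|k]]; try lia.
  rewrite pow_tangent_gap_succ.
  assert (0 <= x * pow_tangent_gap x (S k))
    by (apply Rmult_le_pos; [lra|apply pow_tangent_gap_ge0; lra]).
  assert (1 <= INR (S k)) by (rewrite S_INR; pose proof (pos_INR k); lra).
  assert (0 < (1 - x) ^ 2) by (apply pow_lt; lra).
  nra.
Qed.

Lemma pow_tangent_gap_le_lin x k : 0 <= x <= 1 -> pow_tangent_gap x k <= INR k * (1 - x).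
Proof. intros; pose proof (pow_le1 x k); unfold pow_tangent_gap; lra. Qed.

Lemma pow_tangent_gap_le_quad x k :
  0 <= x <= 1 -> pow_tangent_gap x k <= INR k ^ 2 * (1 - x) ^ 2.
Proof.
  intros x_range; induction k as [|k IH]; [unfold pow_tangent_gap; simpl; lra|].
  rewrite pow_tangent_gap_succ, S_INR; pose proof (pos_INR k).
  pose proof (pow_tangent_gap_ge0 x k x_range).
  assert (0 <= (1 - x) ^ 2) by (apply pow_le; lra).
  nra.
Qed.

Lemma series_tail_small (a : nat -> R) (l eta : R) :
  (forall k, 0 <= a k) -> is_series a l -> 0 < eta ->
  exists K, forall N, sum_f_R0 (fun k => if (k <=? K)%nat then 0 else a k) N <= eta.
Proof.
  intros a_ge0 Ha eta_gt0.
  pose proof Ha as Hlim; apply is_series_partial_sums, is_lim_seq_spec in Hlim.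
  destruct (Hlim (mkposreal eta eta_gt0)) as [K HK]; simpl in HK.
  specialize (HK K (le_n K)); apply Rabs_def2 in HK.
  exists K; intros N.
  set (head := fun k => if (k <=? K)%nat then a k else 0).
  assert (split_sum : forall M, sum_f_R0 (fun k => if (k <=? K)%nat then 0 else a k) M
                                 = sum_f_R0 a M - sum_f_R0 head M).
  { intros M; rewrite <- minus_sum; apply sum_eq; intros k _; unfold head.
    destruct (k <=? K)%nat; ring. }
  assert (head_K : sum_f_R0 head (max N K) = sum_f_R0 a K).
  { unfold head; rewrite (sum_f_R0_trunc _ K) by
      (try lia; intros k lt_k; rewrite (proj2 (Nat.leb_gt k K)) by lia; reflexivity).
    apply sum_eq; intros k le_k; now rewrite (proj2 (Nat.leb_le k K)). }
  apply Rle_trans with (sum_f_R0 (fun k => if (k <=? K)%nat then 0 else a k) (max N K)).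
  - apply sum_f_R0_incr_N; [|lia]; intros k; destruct (k <=? K)%nat; auto; lra.
  - rewrite split_sum, head_K.
    pose proof (partial_sum_le_series a l (max N K) a_ge0 Ha); lra.
Qed.

Definition pgf (mu : nat -> R) (x : R) : R := Series (fun k => mu k * x ^ k).

Section CriticalPgf.
Variable mu : nat -> R.
Hypothesis mu_ge0 : forall k, 0 <= mu k.
Hypothesis mu_sum1 : is_series mu 1.
Hypothesis mu_crit : is_series (fun k => INR k * mu k) 1.

Lemma is_series_pgf x : 0 <= x <= 1 -> is_series (fun k => mu k * x ^ k) (pgf mu x).
Proof.
  intros x_range; apply Series_correct.
  apply (@ex_series_le R_AbsRing R_CompleteNormedModule _ mu); [|now exists 1].
  intros n; change (norm (mu n * x ^ n)) with (Rabs (mu n * x ^ n)).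
  pose proof (mu_ge0 n); pose proof (pow_le1 x n x_range); pose proof (pow_le x n).
  rewrite Rabs_pos_eq; nra.
Qed.

Lemma is_series_pgf_sub_id x :
  0 <= x <= 1 -> is_series (fun k => mu k * pow_tangent_gap x k) (pgf mu x - x).
Proof.
  intros x_range; apply is_series_partial_sums.
  apply is_lim_seq_ext with (fun N => sum_f_R0 (fun k => mu k * x ^ k) N - sum_f_R0 mu N
                                     + (1 - x) * sum_f_R0 (fun k => INR k * mu k) N).
  { intros N; rewrite <- minus_sum, <- sum_f_R0_mult_l, <- plus_sum.
    apply sum_eq; intros; unfold pow_tangent_gap; ring. }
  replace (pgf mu x - x) with (pgf mu x - 1 + (1 - x) * 1) by ring.
  apply is_lim_seq_plus'; [apply is_lim_seq_minus'|apply (is_lim_seq_scal_l _ _ 1)];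
    apply is_series_partial_sums; auto using is_series_pgf.
Qed.

Lemma exists_offspring_ge2 : 0 < mu 0%nat -> exists j, (2 <= j)%nat /\ 0 < mu j.
Proof.
  intros mu0_gt0; apply NNPP; intros no_j.
  assert (mu_ge2 : forall j, (2 <= j)%nat -> mu j = 0).
  { intros j le2j; destruct (mu_ge0 j) as [gt0|eq0]; auto.
    exfalso; apply no_j; now exists j. }
  assert (balance : is_lim_seq (fun N => sum_f_R0 mu N - sum_f_R0 (fun k => INR k * mu k) N)
                      (1 - 1)).
  { apply is_lim_seq_minus'; now apply is_series_partial_sums. }
  apply (is_lim_seq_ext _ (fun _ => mu 0%nat)) in balance.
  - apply is_lim_seq_unique in balance; rewrite Lim_seq_const in balance.
    injection balance as mu0_eq; lra.
  - intros N; rewrite <- minus_sum; induction N as [|N IH]; [simpl; ring|].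
    rewrite tech5, IH; destruct N as [|N]; [simpl; ring|].
    rewrite (mu_ge2 (S (S N))) by lia; ring.
Qed.

Lemma sum_pgf_sub_le x y J :
  0 <= y <= x -> x <= 1 ->
  sum_f_R0 (fun j => mu j * x ^ j) J - sum_f_R0 (fun j => mu j * y ^ j) J <= x - y.
Proof.
  intros y_range x_le1; rewrite <- minus_sum.
  apply Rle_trans with (sum_f_R0 (fun j => (x - y) * (INR j * mu j)) J).
  - apply sum_Rle; intros j _.
    pose proof (pow_sub_pow_le x y j y_range x_le1); pose proof (mu_ge0 j); nra.
  - rewrite sum_f_R0_mult_l.
    assert (sum_f_R0 (fun j => INR j * mu j) J <= 1).
    { apply partial_sum_le_series; auto.
      intros; apply Rmult_le_pos; [apply pos_INR|auto]. }
    nra.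
Qed.

(* Strict convexity of [pgf] on [[0, 1]]. *)
Lemma pgf_le_id_eq1 j e :
  (2 <= j)%nat -> 0 < mu j -> 0 <= e <= 1 -> pgf mu e <= e -> e = 1.
Proof.
  intros le2j mu_j e_range pgf_le; destruct (Req_dec e 1) as [|ne1]; auto; exfalso.
  assert (e_lt1 : 0 <= e < 1) by lra.
  pose proof (is_series_pgf_sub_id e e_range) as gap_series.
  assert (0 < mu j * pow_tangent_gap e j)
    by (apply Rmult_lt_0_compat; auto; apply pow_tangent_gap_gt0; auto).
  assert (mu j * pow_tangent_gap e j <= pgf mu e - e); [|lra].
  apply Rle_trans with (sum_f_R0 (fun k => mu k * pow_tangent_gap e k) j).
  - destruct j as [|j]; [lia|]; rewrite tech5.
    assert (0 <= sum_f_R0 (fun k => mu k * pow_tangent_gap e k) j); [|lra].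
    apply cond_pos_sum; intros; apply Rmult_le_pos; auto; apply pow_tangent_gap_ge0; lra.
  - apply (partial_sum_le_series _ _ j); [|exact gap_series].
    intros; apply Rmult_le_pos; auto; apply pow_tangent_gap_ge0; lra.
Qed.

Lemma pgf_sub_id_little_o eta : 0 < eta ->
  exists delta, 0 < delta /\
    forall x, 0 <= x <= 1 -> 1 - x <= delta -> pgf mu x - x <= eta * (1 - x).
Proof.
  intros eta_gt0.
  destruct (series_tail_small (fun k => INR k * mu k) 1 (eta / 2)) as [K tail]; auto; [|lra|].
  { intros; apply Rmult_le_pos; [apply pos_INR|auto]. }
  set (KK := INR K ^ 2).
  assert (KK_ge0 : 0 <= KK) by (apply pow_le, pos_INR).
  exists (eta / (2 * (KK + 1))); split; [apply Rdiv_lt_0_compat; lra|].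
  intros x x_unit x_near1.
  assert (KK_small : KK * (1 - x) <= eta / 2).
  { assert (KK * (1 - x) <= KK * (eta / (2 * (KK + 1)))) by (apply Rmult_le_compat_l; lra).
    assert (KK * (eta / (2 * (KK + 1))) <= eta / 2); [|lra].
    apply (Rmult_le_reg_r (2 * (KK + 1))); [lra|]; field_simplify; nra. }
  apply (series_le_of_partial_sums _ _ _ (is_series_pgf_sub_id x x_unit)); intros N.
  apply Rle_trans with (sum_f_R0 (fun k => KK * (1 - x) ^ 2 * mu k
    + (1 - x) * (if (k <=? K)%nat then 0 else INR k * mu k)) N).
  - apply sum_Rle; intros k _; pose proof (mu_ge0 k).
    assert (0 <= (1 - x) ^ 2) by (apply pow_le; lra).
    destruct (Nat.leb_spec k K) as [le_kK|lt_Kk].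
    + pose proof (pow_tangent_gap_le_quad x k x_unit).
      assert (INR k ^ 2 <= KK) by (apply pow_incr; split; [apply pos_INR|apply le_INR; lia]).
      assert (pow_tangent_gap x k <= KK * (1 - x) ^ 2) by nra.
      nra.
    + pose proof (pow_tangent_gap_le_lin x k x_unit).
      assert (0 <= KK * (1 - x) ^ 2 * mu k) by (apply Rmult_le_pos; [nra|auto]).
      nra.
  - rewrite plus_sum, !sum_f_R0_mult_l.
    specialize (tail N).
    assert (sum_f_R0 mu N <= 1) by (apply partial_sum_le_series; auto).
    assert (0 <= KK * (1 - x) ^ 2) by (apply Rmult_le_pos; [|apply pow_le]; lra).
    nra.
Qed.

End CriticalPgf.

Definition first_passage_gf (mu : nat -> R) (k N : nat) (s : R) : R :=
  sum_f_R0 (fun n => first_passage mu k n * s ^ n) N.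

Section FirstPassageGen.
Variable mu : nat -> R.
Hypothesis mu_ge0 : forall k, 0 <= mu k.
Hypothesis mu_sum1 : is_series mu 1.

Lemma first_passage_weighted_ge0 k s n : 0 <= s -> 0 <= first_passage mu k n * s ^ n.
Proof. intros; apply Rmult_le_pos; [apply first_passage_ge0; auto|apply pow_le; auto]. Qed.

Lemma first_passage_gf_ge0 k N s : 0 <= s -> 0 <= first_passage_gf mu k N s.
Proof. intros; apply cond_pos_sum; intros; apply first_passage_weighted_ge0; auto. Qed.

Lemma first_passage_gf_incr_N k N M s : 0 <= s -> (N <= M)%nat ->
  first_passage_gf mu k N s <= first_passage_gf mu k M s.
Proof. intros; apply sum_f_R0_incr_N; auto; intros; apply first_passage_weighted_ge0; auto. Qed.

Lemma first_passage_gf_le1 k N s : 0 <= s <= 1 -> first_passage_gf mu k N s <= 1.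
Proof.
  intros s_range; apply Rle_trans with (sum_f_R0 (first_passage mu k) N);
    [|apply first_passage_mass_le1; auto].
  apply sum_Rle; intros n _; pose proof (first_passage_ge0 mu mu_ge0 k n).
  pose proof (pow_le1 s n s_range); nra.
Qed.

Lemma first_passage_gf_at1 k N : first_passage_gf mu k N 1 = sum_f_R0 (first_passage mu k) N.
Proof. apply sum_eq; intros; rewrite pow1; ring. Qed.

Lemma first_passage_gf_early k N s : (N < k)%nat -> first_passage_gf mu k N s = 0.
Proof.
  intros; apply sum_eq_R0; intros n le_nN.
  rewrite first_passage_early by (auto; lia); ring.
Qed.

Lemma first_passage_gf_level0 N s : first_passage_gf mu 0 N s = 1.
Proof.
  unfold first_passage_gf; induction N as [|N IH]; [simpl; ring|].
  rewrite tech5, IH; change (first_passage mu 0 (S N)) with 0; ring.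
Qed.

Lemma first_passage_weighted_add a b s n :
  first_passage mu (a + b) n * s ^ n =
  sum_f_R0 (fun m => first_passage mu a m * s ^ m
                     * (first_passage mu b (n - m) * s ^ (n - m))) n.
Proof.
  rewrite first_passage_add by auto; rewrite Rmult_comm, scal_sum.
  apply sum_eq; intros m le_mn.
  replace (s ^ n) with (s ^ m * s ^ (n - m)) by (rewrite <- pow_add; f_equal; lia).
  ring.
Qed.

Lemma first_passage_gf_le_pow j N s : 0 <= s ->
  first_passage_gf mu j N s <= first_passage_gf mu 1 N s ^ j.
Proof.
  intros s_ge0; induction j as [|j IH]; [rewrite first_passage_gf_level0; simpl; lra|].
  unfold first_passage_gf at 1.
  rewrite (sum_eq _ _ _ (fun n _ => first_passage_weighted_add 1 j s n)).
  apply Rle_trans with (first_passage_gf mu 1 N s * first_passage_gf mu j N s).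
  - apply (cauchy_product_le (fun m => first_passage mu 1 m * s ^ m)
                              (fun m => first_passage mu j m * s ^ m));
      intros; apply first_passage_weighted_ge0; auto.
  - simpl; apply Rmult_le_compat_l; [apply first_passage_gf_ge0|]; auto.
Qed.

Lemma pow_le_first_passage_gf j N s : 0 <= s ->
  first_passage_gf mu 1 N s ^ j <= first_passage_gf mu j (j * N) s.
Proof.
  intros s_ge0; induction j as [|j IH]; [rewrite first_passage_gf_level0; simpl; lra|].
  simpl pow; apply Rle_trans with (first_passage_gf mu 1 N s * first_passage_gf mu j (j * N) s).
  - apply Rmult_le_compat_l; [apply first_passage_gf_ge0|]; auto.
  - unfold first_passage_gf at 3; change (S j * N)%nat with (N + j * N)%nat.
    rewrite (sum_eq _ _ _ (fun n _ => first_passage_weighted_add 1 j s n)).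
    apply (cauchy_product_ge (fun m => first_passage mu 1 m * s ^ m)
                             (fun m => first_passage mu j m * s ^ m));
      intros; apply first_passage_weighted_ge0; auto.
Qed.

(* A first step of size [j] leaves the walk at level [j]. *)
Lemma first_passage_gf_1_succ N s :
  first_passage_gf mu 1 (S N) s = s * sum_f_R0 (fun j => mu j * first_passage_gf mu j N s) N.
Proof.
  unfold first_passage_gf; rewrite decomp_sum by lia; simpl pred; simpl (first_passage mu 1 0).
  rewrite Rmult_0_l, Rplus_0_l, <- sum_f_R0_mult_l.
  rewrite (sum_eq _ (fun n => sum_f_R0 (fun j => s * (mu j * first_passage mu j n * s ^ n)) n))
    by (intros n _; rewrite first_passage_succ_level, Rmult_comm, <- sum_f_R0_mult_l;
        apply sum_eq; intros; simpl; ring).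
  rewrite sum_f_R0_swap_triangle
    by (intros j n lt_nj; rewrite first_passage_early by (auto; lia); ring).
  apply sum_eq; intros j _; rewrite <- !sum_f_R0_mult_l; apply sum_eq; intros; ring.
Qed.

Lemma sum_mu_first_passage_gf_le J L s : 0 <= s ->
  sum_f_R0 (fun j => mu j * first_passage_gf mu j L s) J
  <= sum_f_R0 (fun j => mu j * first_passage_gf mu j L s) L.
Proof.
  intros s_ge0; destruct (Nat.le_gt_cases J L) as [le_JL|lt_LJ].
  - apply sum_f_R0_incr_N; auto; intros; apply Rmult_le_pos; auto; apply first_passage_gf_ge0; auto.
  - right; apply sum_f_R0_trunc; [lia|]; intros j lt_j; rewrite first_passage_gf_early by lia; ring.
Qed.

End FirstPassageGen.

Lemma sum_n_geom_le (r : R) (N : nat) :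
  0 <= r < 1 -> (1 - r) ^ 2 * sum_f_R0 (fun n => INR n * r ^ n) N <= r.
Proof.
  intros r_range.
  assert (closed_form : (1 - r) ^ 2 * sum_f_R0 (fun n => INR n * r ^ n) N
                        = r - r ^ N * r * (INR N + 1 - INR N * r)).
  { induction N as [|N IH]; [simpl; ring|].
    rewrite tech5, Rmult_plus_distr_l, IH, S_INR; simpl; ring. }
  rewrite closed_form; pose proof (pow_le r N (proj1 r_range)); pose proof (pos_INR N).
  assert (0 <= INR N + 1 - INR N * r) by nra.
  assert (0 <= r ^ N * r) by nra.
  nra.
Qed.

Section NoExponentialDecay.
Variable mu : nat -> R.
Hypothesis mu_ge0 : forall k, 0 <= mu k.
Hypothesis mu_sum1 : is_series mu 1.
Hypothesis mu_crit : is_series (fun k => INR k * mu k) 1.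
Variables (j0 : nat) (C r : R).
Hypothesis le2j0 : (2 <= j0)%nat.
Hypothesis mu_j0 : 0 < mu j0.
Hypothesis r_range : 0 <= r < 1.
Hypothesis exp_decay : forall n, first_passage mu 1 n <= C * r ^ n.

Let hit_total := Series (first_passage mu 1).

Lemma is_series_hit_total : is_series (first_passage mu 1) hit_total.
Proof.
  apply Series_correct.
  apply (@ex_series_le R_AbsRing R_CompleteNormedModule _ (fun n => C * r ^ n)).
  - intros n; change (norm (first_passage mu 1 n)) with (Rabs (first_passage mu 1 n)).
    rewrite Rabs_pos_eq by (apply first_passage_ge0; auto); apply exp_decay.
  - apply (ex_series_scal (K := R_AbsRing) (V := R_NormedModule) C (fun n => r ^ n)).
    apply ex_series_geom; rewrite Rabs_pos_eq; lra.
Qed.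

Lemma first_passage_gf_at1_le_total N : first_passage_gf mu 1 N 1 <= hit_total.
Proof.
  rewrite first_passage_gf_at1; apply partial_sum_le_series; [|apply is_series_hit_total].
  intros; apply first_passage_ge0; auto.
Qed.

Lemma hit_total_range : 0 <= hit_total <= 1.
Proof.
  split.
  - apply Rle_trans with (first_passage_gf mu 1 0 1);
      [apply first_passage_gf_ge0|apply first_passage_gf_at1_le_total]; auto; lra.
  - apply (series_le_of_partial_sums _ _ _ is_series_hit_total); intros N.
    apply first_passage_mass_le1; auto.
Qed.

Lemma pgf_hit_total_le : pgf mu hit_total <= hit_total.
Proof.
  apply (series_le_of_partial_sums _ _ _ (is_series_pgf mu mu_ge0 mu_sum1 _ hit_total_range)).
  intros J; set (E := fun N => first_passage_gf mu 1 N 1).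
  assert (E_lim : is_lim_seq E hit_total).
  { apply (is_lim_seq_ext (sum_f_R0 (first_passage mu 1)));
      [intros; unfold E; now rewrite first_passage_gf_at1|].
    now apply is_series_partial_sums, is_series_hit_total. }
  assert (bound : forall N, sum_f_R0 (fun j => mu j * hit_total ^ j) J
                            <= hit_total + (hit_total - E N)).
  { intros N.
    assert (E_range : 0 <= E N <= hit_total)
      by (split; [apply first_passage_gf_ge0|apply first_passage_gf_at1_le_total]; auto; lra).
    pose proof (sum_pgf_sub_le mu mu_ge0 mu_crit hit_total (E N) J E_range
                  (proj2 hit_total_range)).
    assert (sum_f_R0 (fun j => mu j * E N ^ j) J <= hit_total); [|lra].
    apply Rle_trans with (sum_f_R0 (fun j => mu j * first_passage_gf mu j (J * N) 1) J).
    - apply sum_Rle; intros j le_jJ; apply Rmult_le_compat_l; auto.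
      apply Rle_trans with (first_passage_gf mu j (j * N) 1);
        [apply pow_le_first_passage_gf; auto; lra|].
      apply first_passage_gf_incr_N; [auto|lra|]; apply Nat.mul_le_mono_r; lia.
    - apply Rle_trans with (sum_f_R0 (fun j => mu j * first_passage_gf mu j (J * N) 1) (J * N));
        [apply sum_mu_first_passage_gf_le; auto; lra|].
      apply Rle_trans with (first_passage_gf mu 1 (S (J * N)) 1);
        [rewrite first_passage_gf_1_succ; lra|].
      apply first_passage_gf_at1_le_total. }
  pose proof (is_lim_seq_plus' _ _ _ _ (is_lim_seq_const hit_total)
                (is_lim_seq_minus' _ _ _ _ (is_lim_seq_const hit_total) E_lim)) as lim.
  replace (hit_total + (hit_total - hit_total)) with hit_total in lim by ring.
  exact (is_lim_seq_le _ _ _ _ bound (is_lim_seq_const _) lim).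
Qed.

Lemma hit_total_eq1 : hit_total = 1.
Proof.
  apply (pgf_le_id_eq1 mu mu_ge0 mu_sum1 mu_crit j0); auto.
  - apply hit_total_range.
  - apply pgf_hit_total_le.
Qed.

Lemma first_passage_gf_sub_le N s : 0 <= s <= 1 ->
  first_passage_gf mu 1 N 1 - first_passage_gf mu 1 N s <= C * r / (1 - r) ^ 2 * (1 - s).
Proof.
  intros s_range; unfold first_passage_gf; rewrite <- minus_sum.
  assert (C_ge0 : 0 <= C) by (pose proof (exp_decay 0); simpl in *; lra).
  apply Rle_trans with (sum_f_R0 (fun n => C * (1 - s) * (INR n * r ^ n)) N).
  - apply sum_Rle; intros n _; rewrite pow1.
    pose proof (pow_sub_pow_le 1 s n s_range (Rle_refl 1)) as gap; rewrite pow1 in gap.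
    pose proof (exp_decay n); pose proof (first_passage_ge0 mu mu_ge0 1 n).
    pose proof (pow_le1 s n s_range); pose proof (pow_le r n (proj1 r_range)).
    assert (first_passage mu 1 n * (1 - s ^ n) <= C * r ^ n * (1 - s ^ n))
      by (apply Rmult_le_compat_r; lra).
    assert (0 <= C * r ^ n) by (apply Rmult_le_pos; lra).
    assert (C * r ^ n * (1 - s ^ n) <= C * r ^ n * (INR n * (1 - s)))
      by (apply Rmult_le_compat_l; lra).
    nra.
  - rewrite sum_f_R0_mult_l.
    pose proof (sum_n_geom_le r N r_range).
    assert (0 < (1 - r) ^ 2) by (apply pow_lt; lra).
    assert (0 <= C * (1 - s)) by (apply Rmult_le_pos; lra).
    replace (C * r / (1 - r) ^ 2 * (1 - s)) with (C * (1 - s) * (r / (1 - r) ^ 2)) by (field; lra).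
    apply Rmult_le_compat_l; auto.
    apply (Rmult_le_reg_l ((1 - r) ^ 2)); auto; field_simplify; lra.
Qed.

(* Truncated form of [F(s) = s * pgf (F(s))] for the generating function of the
   first-passage time. *)
Lemma first_passage_gf_le_s_pgf N s : 0 <= s <= 1 ->
  first_passage_gf mu 1 (S N) s <= s * pgf mu (first_passage_gf mu 1 (S N) s).
Proof.
  intros s_range; set (y := first_passage_gf mu 1 (S N) s).
  assert (y_range : 0 <= y <= 1)
    by (split; [apply first_passage_gf_ge0|apply first_passage_gf_le1]; auto; lra).
  unfold y at 1; rewrite first_passage_gf_1_succ; apply Rmult_le_compat_l; [lra|].
  apply Rle_trans with (sum_f_R0 (fun j => mu j * y ^ j) N);
    [|apply partial_sum_le_series; [intros; apply Rmult_le_pos; auto; apply pow_le; lra|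
                                    apply is_series_pgf; auto]].
  apply sum_Rle; intros j _; apply Rmult_le_compat_l; auto.
  apply Rle_trans with (first_passage_gf mu 1 N s ^ j); [apply first_passage_gf_le_pow; auto; lra|].
  apply pow_incr; split; [apply first_passage_gf_ge0; auto; lra|].
  apply first_passage_gf_incr_N; auto; lra.
Qed.

Lemma first_passage_gf_near1 d : 0 < d <= 1 ->
  exists N, 1 - first_passage_gf mu 1 (S N) (1 - d) <= (C * r / (1 - r) ^ 2 + 1) * d.
Proof.
  intros d_range; pose proof is_series_hit_total as E_lim.
  apply is_series_partial_sums, is_lim_seq_spec in E_lim.
  destruct (E_lim (mkposreal d (proj1 d_range))) as [N HN]; simpl in HN.
  specialize (HN (S N) (le_S _ _ (le_n N))); rewrite hit_total_eq1 in HN.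
  apply Rabs_def2 in HN; rewrite <- first_passage_gf_at1 in HN.
  exists N; pose proof (first_passage_gf_sub_le (S N) (1 - d) ltac:(lra)); lra.
Qed.

(* For [s = 1 - d] close to [1], [y = F(s)] is within [B d] of [1], so criticality gives
   [pgf y - y <= d / 4], while [y <= s * pgf y] forces [pgf y - y >= d y >= d / 2]. *)
Lemma exp_decay_absurd : False.
Proof.
  set (B := C * r / (1 - r) ^ 2 + 1).
  assert (B_ge1 : 1 <= B).
  { assert (0 <= C) by (pose proof (exp_decay 0); simpl in *; lra).
    assert (0 < (1 - r) ^ 2) by (apply pow_lt; lra).
    assert (0 <= C * r / (1 - r) ^ 2)
      by (apply Rmult_le_pos; [apply Rmult_le_pos; lra|left; apply Rinv_0_lt_compat; lra]).
    unfold B; lra. }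
  destruct (pgf_sub_id_little_o mu mu_ge0 mu_sum1 mu_crit (/ (4 * B)))
    as [delta [delta_gt0 little_o]]; [apply Rinv_0_lt_compat; lra|].
  set (d := Rmin (delta / B) (/ (2 * B))).
  assert (d_gt0 : 0 < d) by (apply Rmin_pos; [apply Rdiv_lt_0_compat|apply Rinv_0_lt_compat]; lra).
  assert (Bd_le : B * d <= delta /\ B * d <= / 2).
  { split.
    - apply Rle_trans with (B * (delta / B)); [apply Rmult_le_compat_l; [lra|apply Rmin_l]|].
      right; field; lra.
    - apply Rle_trans with (B * / (2 * B)); [apply Rmult_le_compat_l; [lra|apply Rmin_r]|].
      right; field; lra. }
  assert (d_le : d <= / 2) by nra.
  destruct (first_passage_gf_near1 d ltac:(lra)) as [N y_near1]; fold B in y_near1.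
  set (y := first_passage_gf mu 1 (S N) (1 - d)) in y_near1.
  assert (y_range : 0 <= y <= 1)
    by (split; [apply first_passage_gf_ge0|apply first_passage_gf_le1]; auto; lra).
  pose proof (first_passage_gf_le_s_pgf N (1 - d) ltac:(lra)) as functional.
  fold y in functional.
  assert (gap_lower : d * y <= pgf mu y - y) by nra.
  assert (gap_upper : pgf mu y - y <= d / 4).
  { apply Rle_trans with (/ (4 * B) * (1 - y)); [apply little_o; auto; lra|].
    apply Rle_trans with (/ (4 * B) * (B * d));
      [apply Rmult_le_compat_l; [left; apply Rinv_0_lt_compat|]; lra|].
    right; field; lra. }
  nra.
Qed.

End NoExponentialDecay.

Lemma exp_le_exp_compat (x y : R) : x <= y -> exp x <= exp y.
Proof. intros [lt|<-]; [left; now apply exp_increasing|lra]. Qed.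

Lemma exists_bounded_representatives (P : nat -> Prop) (f : nat -> nat) (R : nat) :
  (forall n, (f n < R)%nat) ->
  exists K, forall n, P n -> exists m, (m <= K)%nat /\ P m /\ f m = f n.
Proof.
  intros f_lt.
  enough (H : forall R', exists K, forall n, P n -> (f n < R')%nat ->
                exists m, (m <= K)%nat /\ P m /\ f m = f n).
  { destruct (H R) as [K HK]; exists K; intros n Pn; exact (HK n Pn (f_lt n)). }
  intros R'; induction R' as [|R' [K HK]]; [exists 0%nat; intros; lia|].
  destruct (classic (exists m, P m /\ f m = R')) as [[m [Pm fm]]|no_m].
  - exists (max K m); intros n Pn lt_fn.
    destruct (Nat.eq_dec (f n) R') as [eq_fn|ne_fn].
    + exists m; repeat split; [lia|auto|congruence].
    + destruct (HK n Pn ltac:(lia)) as [m' [le_m' rest]]; exists m'; split; [lia|auto].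
  - exists K; intros n Pn lt_fn; apply HK; auto.
    destruct (Nat.eq_dec (f n) R'); [exfalso; apply no_m; now exists n|lia].
Qed.

Lemma positive_values_lower_bound (f : nat -> R) (K : nat) :
  exists kap, 0 < kap /\ forall m, (m <= K)%nat -> 0 < f m -> kap <= f m.
Proof.
  induction K as [|K [kap [kap_gt0 Hkap]]].
  - destruct (Rlt_or_le 0 (f 0%nat)) as [pos|nonpos].
    + exists (f 0%nat); split; auto; intros m le_m _; replace m with 0%nat by lia; lra.
    + exists 1; split; [lra|]; intros m le_m pos; replace m with 0%nat in pos by lia; lra.
  - exists (Rmin kap (if Rlt_dec 0 (f (S K)) then f (S K) else kap)); split.
    + apply Rmin_pos; auto; destruct (Rlt_dec 0 (f (S K))); auto.
    + intros m le_m pos; destruct (Nat.eq_dec m (S K)) as [->|ne].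
      * destruct (Rlt_dec 0 (f (S K))); [apply Rmin_r|lra].
      * apply Rle_trans with kap; [apply Rmin_l|apply Hkap; auto; lia].
Qed.

Lemma periodic_growth_iterate (q : nat -> R) (M : nat) (a : R) :
  (forall n, q n * exp (- a * INR M) <= q (n + M)%nat) ->
  forall t m, q m * exp (- a * INR (t * M)) <= q (m + t * M)%nat.
Proof.
  intros period t; induction t as [|t IH]; intros m.
  - simpl; rewrite Rmult_0_r, exp_0, Nat.add_0_r; lra.
  - replace (m + S t * M)%nat with (m + t * M + M)%nat by lia.
    replace (- a * INR (S t * M)) with (- a * INR (t * M) + - a * INR M)
      by (rewrite Nat.mul_succ_l, plus_INR; ring).
    rewrite exp_plus, <- Rmult_assoc.
    apply Rle_trans with (q (m + t * M)%nat * exp (- a * INR M)); [|apply period].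
    apply Rmult_le_compat_r; [left; apply exp_pos|apply IH].
Qed.

(* Every [n] in the support of [q] is congruent modulo [M] to one of finitely many
   small elements of the support. *)
Lemma periodic_growth_lower_bound (q : nat -> R) (M : nat) (a : R) :
  (0 < M)%nat -> 0 <= a -> (forall n, 0 <= q n) ->
  (forall n, q n * exp (- a * INR M) <= q (n + M)%nat) ->
  exists kap, 0 < kap /\ forall n, 0 < q n -> kap * exp (- a * INR n) <= q n.
Proof.
  intros M_gt0 a_ge0 q_ge0 period.
  destruct (exists_bounded_representatives (fun n => 0 < q n) (fun n => n mod M) M)
    as [K HK]; [intros; apply Nat.mod_upper_bound; lia|].
  destruct (positive_values_lower_bound q K) as [kap [kap_gt0 Hkap]].
  exists kap; split; auto; intros n q_n.
  assert (exp_le : forall k, (k <= n)%nat -> exp (- a * INR n) <= exp (- a * INR k)).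
  { intros k le_kn; apply exp_le_exp_compat; pose proof (le_INR _ _ le_kn); nra. }
  destruct (HK n q_n) as [m [le_mK [q_m mod_eq]]]; simpl in mod_eq.
  destruct (Nat.le_gt_cases n K) as [le_nK|lt_Kn].
  - pose proof (Hkap n le_nK q_n); pose proof (exp_le 0%nat ltac:(lia)).
    simpl in *; rewrite Rmult_0_r, exp_0 in *.
    pose proof (exp_pos (- a * INR n)); nra.
  - pose proof (Nat.div_mod n M ltac:(lia)); pose proof (Nat.div_mod m M ltac:(lia)).
    assert (n_eq : n = (m + (n / M - m / M) * M)%nat) by nia.
    pose proof (periodic_growth_iterate q M a period (n / M - m / M) m) as grow.
    rewrite <- n_eq in grow.
    pose proof (Hkap m le_mK q_m).
    pose proof (exp_le ((n / M - m / M) * M)%nat ltac:(lia)).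
    pose proof (exp_pos (- a * INR n)).
    apply Rle_trans with (q m * exp (- a * INR ((n / M - m / M) * M))); [|exact grow].
    apply Rmult_le_compat; lra.
Qed.

Lemma exp_mult_INR (a : R) (n : nat) : exp (a * INR n) = exp a ^ n.
Proof.
  induction n as [|n IH]; [simpl; now rewrite Rmult_0_r, exp_0|].
  rewrite S_INR, Rmult_plus_distr_l, Rmult_1_r, exp_plus, IH; simpl; ring.
Qed.

Section WalkProbLowerBound.
Variable mu : nat -> R.
Hypothesis mu_ge0 : forall k, 0 <= mu k.
Hypothesis mu_sum1 : is_series mu 1.
Hypothesis mu_crit : is_series (fun k => INR k * mu k) 1.
Variable j0 : nat.
Hypothesis le2j0 : (2 <= j0)%nat.
Hypothesis mu_j0 : 0 < mu j0.
Hypothesis mu0_gt0 : 0 < mu 0%nat.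

Let c := mu j0 * mu 0%nat ^ (j0 - 2).

(* Otherwise [first_passage mu 1 <= walk_prob mu] would decay exponentially. *)
Lemma walk_prob_not_exp_small delta : 0 < delta ->
  exists n0, exp (- delta * INR (n0 + j0 - 1)) <= c * walk_prob mu n0.
Proof.
  intros delta_gt0; apply NNPP; intros small.
  assert (c_gt0 : 0 < c) by (apply Rmult_lt_0_compat; auto; apply pow_lt; auto).
  apply (exp_decay_absurd mu mu_ge0 mu_sum1 mu_crit j0 (/ c) (exp (- delta))); auto.
  - split; [left; apply exp_pos|rewrite <- exp_0; apply exp_increasing; lra].
  - intros n; apply Rle_trans with (walk_prob mu n); [apply first_passage_le_walk_prob; auto|].
    apply (Rmult_le_reg_l c); auto; rewrite <- Rmult_assoc, Rinv_r, Rmult_1_l by lra.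
    rewrite <- exp_mult_INR.
    apply Rle_trans with (exp (- delta * INR (n + j0 - 1))).
    + apply Rnot_lt_le; intros gt; apply small; exists n; lra.
    + apply exp_le_exp_compat; pose proof (le_INR n (n + j0 - 1) ltac:(lia)); nra.
Qed.

Lemma walk_prob_lower_bound delta : 0 < delta ->
  exists kap, 0 < kap /\
    forall n, 0 < walk_prob mu n -> kap * exp (- delta * INR n) <= walk_prob mu n.
Proof.
  intros delta_gt0; destruct (walk_prob_not_exp_small delta delta_gt0) as [n0 good].
  apply (periodic_growth_lower_bound _ (n0 + j0 - 1)); [lia|lra|apply walk_prob_ge0; auto|].
  intros n; pose proof (walk_prob_supermult mu mu_ge0 j0 n n0 le2j0) as super.
  replace (n + n0 + j0 - 1)%nat with (n + (n0 + j0 - 1))%nat in super by lia.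
  pose proof (walk_prob_ge0 mu mu_ge0 n); fold c in super.
  apply Rle_trans with (walk_prob mu n * (c * walk_prob mu n0)); [|lra].
  apply Rmult_le_compat_l; auto.
Qed.

End WalkProbLowerBound.

Lemma exp_half_eventually_le (kap eps : R) : 0 < kap -> 0 < eps ->
  exists N, forall n, (N <= n)%nat -> exp (- (eps * INR n)) <= kap * exp (- (eps / 2) * INR n).
Proof.
  intros kap_gt0 eps_gt0; destruct (INR_unbounded (- ln kap / (eps / 2))) as [N HN].
  exists N; intros n le_Nn; pose proof (le_INR _ _ le_Nn).
  assert (ln_bound : - (eps / 2) * INR n <= ln kap).
  { assert (- ln kap <= eps / 2 * INR n); [|lra].
    apply Rle_trans with (eps / 2 * INR N); [|apply Rmult_le_compat_l; lra].
    apply (Rmult_le_reg_r (/ (eps / 2))); [apply Rinv_0_lt_compat; lra|].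
    replace (eps / 2 * INR N * / (eps / 2)) with (INR N) by (field; lra); lra. }
  replace (- (eps * INR n)) with (- (eps / 2) * INR n + - (eps / 2) * INR n) by field.
  rewrite exp_plus; apply Rmult_le_compat_r; [left; apply exp_pos|].
  rewrite <- (exp_ln kap kap_gt0); now apply exp_le_exp_compat.
Qed.

Theorem mainTheorem12 (mu : nat -> R) :
  offspring_distribution mu -> critical mu ->
  forall eps : R, 0 < eps ->
  exists N : nat, forall n : nat, (N <= n)%nat -> 0 < walk_prob mu n ->
    exp (- (eps * INR n)) <= walk_prob mu n <= exp (eps * INR n).
Proof.
  intros [mu_ge0 mu_sum1] mu_crit eps eps_gt0.
  destruct (mu_ge0 0%nat) as [mu0_gt0|mu0_eq0].
  - destruct (exists_offspring_ge2 mu mu_ge0 mu_sum1 mu_crit mu0_gt0) as [j0 [le2j0 mu_j0]].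
    destruct (walk_prob_lower_bound mu mu_ge0 mu_sum1 mu_crit j0 le2j0 mu_j0 mu0_gt0 (eps / 2))
      as [kap [kap_gt0 lower]]; [lra|].
    destruct (exp_half_eventually_le kap eps kap_gt0 eps_gt0) as [N HN].
    exists N; intros n le_Nn pos; split.
    + apply Rle_trans with (kap * exp (- (eps / 2) * INR n)); auto.
    + apply Rle_trans with 1; [apply walk_prob_le1; auto|].
      rewrite <- exp_0; apply exp_le_exp_compat; pose proof (pos_INR n); nra.
  - exists 0%nat; intros [|n] _ pos; unfold walk_prob in pos; [lra|].
    rewrite (conv_pow_lt_eq0 mu (eq_sym mu0_eq0)) in pos by lia; lra.
Qed.
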